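(* 1. $W_v(P_4)=2$ and $D_v(P_4)=3$. 2. $D_\kappa(C_4)=4$ and $W_\kappa(C_4)\ge 3$.
   Context: Graphs are finite simple graphs; $P_4$ is the path on 4 vertices and $C_4$ the cycle on 4 vertices. A graph is $k$-connected if it has more than $k$ vertices, is connected, and remains connected after removal of any $k-1$ vertices; $\kappa(G)$ is the maximum $k$ such that $G$ is $k$-connected; $v(G)$ is the number of vertices. We use first-order logic of graphs with relation symbols for adjacency and equality only; the variable width of a sentence is the number of distinct variables it uses. For a graph parameter $\pi\in\{v,\kappa\}$, $D_\pi(F)$ (resp. $W_\pi(F)$) is the minimum quantifier depth (resp. variable width) of a first-order sentence $\Phi$ for which there is an integer $k$ such that for every connected graph $G$ with $\pi(G)\ge k$, $G\models\Phi$ if and only if $G$ contains a (not necessarily induced) subgraph isomorphic to $F$. *)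

From mathcomp Require Import all_boot.
Set Implicit Arguments. Unset Strict Implicit. Unset Printing Implicit Defensive.

(* ---------- finite simple graphs (vertex set 'I_n; every finite graph is
   isomorphic to one of these, and all notions below are iso-invariant) ---- *)
Record graph := Graph {
  gn : nat;
  gadj : rel 'I_gn;
  gsym : symmetric gadj;
  girr : irreflexive gadj }.

Definition nverts (G : graph) : nat := gn G.

Definition connected_on (G : graph) (A : {set 'I_(gn G)}) : Prop :=
  (exists x, x \in A) /\
  forall x y, x \in A -> y \in A ->
    connect [rel a b | [&& @gadj G a b, a \in A & b \in A]] x y.

Arguments connected_on : clear implicits.

Definition connected (G : graph) : Prop := connected_on G setT.

Definition kconnected (G : graph) (k : nat) : Prop :=
  k < gn G /\ connected G /\
  forall S : {set 'I_(gn G)}, #|S| < k -> connected_on G (~: S).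

(* kappa(G) >= k, where kappa(G) is the maximum k' with G k'-connected *)
Definition kappa_ge (G : graph) (k : nat) : Prop :=
  exists k', k <= k' /\ kconnected G k'.

Inductive param := Pv | Pkappa.

Definition param_ge (p : param) (G : graph) (k : nat) : Prop :=
  match p with
  | Pv => k <= nverts G
  | Pkappa => kappa_ge G k
  end.

(* F is isomorphic to a (not necessarily induced) subgraph of G *)
Definition contains (G F : graph) : Prop :=
  exists f : 'I_(gn F) -> 'I_(gn G),
    injective f /\ forall a b, @gadj F a b -> @gadj G (f a) (f b).

Definition p4_adj : rel 'I_4 := fun i j => (i.+1 == j :> nat) || (j.+1 == i :> nat).
Lemma p4_sym : symmetric p4_adj.
Proof. by move=> i j; rewrite /p4_adj orbC. Qed.
Lemma p4_irr : irreflexive p4_adj.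
Proof. by move=> i; rewrite /p4_adj; case: i => [[|[|[|[|]]]] ?]. Qed.
Definition P4 : graph := Graph p4_sym p4_irr.

Definition c4_adj : rel 'I_4 :=
  fun i j => ((i.+1 %% 4) == j :> nat) || ((j.+1 %% 4) == i :> nat).
Lemma c4_sym : symmetric c4_adj.
Proof. by move=> i j; rewrite /c4_adj orbC. Qed.
Lemma c4_irr : irreflexive c4_adj.
Proof. by move=> i; rewrite /c4_adj; case: i => [[|[|[|[|]]]] ?]. Qed.
Definition C4 : graph := Graph c4_sym c4_irr.

Inductive form :=
  | FEq of nat & nat
  | FAdj of nat & nat
  | FNot of form
  | FAnd of form & form
  | FOr of form & form
  | FImp of form & form
  | FEx of nat & form
  | FAll of nat & form.

Fixpoint free (x : nat) (f : form) : bool :=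
  match f with
  | FEq a b | FAdj a b => (x == a) || (x == b)
  | FNot g => free x g
  | FAnd g h | FOr g h | FImp g h => free x g || free x h
  | FEx y g | FAll y g => (x != y) && free x g
  end.

Definition sentence (f : form) : Prop := forall x, ~~ free x f.

Fixpoint qd (f : form) : nat :=
  match f with
  | FEq _ _ | FAdj _ _ => 0
  | FNot g => qd g
  | FAnd g h | FOr g h | FImp g h => maxn (qd g) (qd h)
  | FEx _ g | FAll _ g => (qd g).+1
  end.

Fixpoint vars (f : form) : seq nat :=
  match f with
  | FEq a b | FAdj a b => [:: a; b]
  | FNot g => vars g
  | FAnd g h | FOr g h | FImp g h => vars g ++ vars h
  | FEx y g | FAll y g => y :: vars g
  end.

Definition width (f : form) : nat := size (undup (vars f)).

Definition upd {T} (env : nat -> option T) (x : nat) (v : T) : nat -> option T :=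
  fun y => if y == x then Some v else env y.

Fixpoint sat (G : graph) (env : nat -> option 'I_(gn G)) (f : form) : Prop :=
  match f with
  | FEq a b => match env a, env b with Some u, Some v => u = v | _, _ => False end
  | FAdj a b => match env a, env b with Some u, Some v => @gadj G u v | _, _ => False end
  | FNot g => ~ sat env g
  | FAnd g h => sat env g /\ sat env h
  | FOr g h => sat env g \/ sat env h
  | FImp g h => sat env g -> sat env h
  | FEx x g => exists v : 'I_(gn G), sat (upd env x v) g
  | FAll x g => forall v : 'I_(gn G), sat (upd env x v) g
  end.

Definition models (G : graph) (f : form) : Prop := @sat G (fun _ => None) f.

Definition defines (p : param) (F : graph) (Phi : form) : Prop :=
  sentence Phi /\
  exists k, forall G : graph, connected G -> param_ge p G k ->
    (models G Phi <-> contains G F).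

Definition D_is (p : param) (F : graph) (d : nat) : Prop :=
  (exists Phi, defines p F Phi /\ qd Phi = d) /\
  (forall Phi, defines p F Phi -> d <= qd Phi).

Definition W_is (p : param) (F : graph) (w : nat) : Prop :=
  (exists Phi, defines p F Phi /\ width Phi = w) /\
  (forall Phi, defines p F Phi -> w <= width Phi).

Definition W_ge (p : param) (F : graph) (w : nat) : Prop :=
  forall Phi, defines p F Phi -> w <= width Phi.

From mathcomp Require Import all_boot ssralg zmodp zify ring.
From Stdlib Require Import Classical_Prop.
Set Implicit Arguments. Unset Strict Implicit. Unset Printing Implicit Defensive.
Import GRing.Theory.

(* Upper bounds: on connected graphs with at least five vertices, having no P4 means
   being a star, which two variables and quantifier depth three can express; a C4 is
   found by four nested existentials.
   Lower bounds: for every k there are two connected graphs, large in the relevant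
   parameter, only one of which contains F, that no shallower or narrower sentence
   distinguishes.  For P4 take a star and the same star plus an edge between two leaves:
   every vertex has the same neighbour/non-neighbour profile in both, so Duplicator wins
   the two-round Ehrenfeucht-Fraisse game, and one variable cannot tell nonempty graphs
   apart at all.  For C4 take the point-line incidence graph of the affine plane over
   F_p (two points lie on at most one line, so it has no C4) and the same graph plus one
   point-line edge, which closes a C4.  Both are highly connected and satisfy extension
   properties that let Duplicator survive three rounds, or play forever with two
   pebbles. *)

Lemma avoid_card (T : finType) (A B : {pred T}) :
  #|B| < #|A| -> exists2 c, c \in A & c \notin B.
Proof.
move=> BA; apply/exists_inP; rewrite -negb_forall_in; apply: contraTN BA => /forall_inP AB.
by rewrite -leqNgt; apply/subset_leq_card/subsetP => c /AB.
Qed.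

(** * Ehrenfeucht-Fraisse and pebble games *)

Section PairType.
Variables (T : eqType) (r : rel T).

Definition ptype (u v : T) : bool * bool := (u == v, r u v).

Lemma ptypeC : symmetric r -> forall u v, ptype u v = ptype v u.
Proof. by move=> rs u v; rewrite /ptype eq_sym rs. Qed.

Lemma ptypexx : irreflexive r -> forall u, ptype u u = (true, false).
Proof. by move=> ri u; rewrite /ptype eqxx ri. Qed.

End PairType.

Notation env G := (nat -> option 'I_(gn G)).

Definition atom_type (G : graph) (e : env G) (a b : nat) : option (bool * bool) :=
  if (e a, e b) is (Some u, Some v) then Some (ptype (@gadj G) u v) else None.

Definition agree_on (G1 G2 : graph) (S : {pred nat}) (e1 : env G1) (e2 : env G2) :=
  {in S &, forall a b, atom_type e1 a b = atom_type e2 a b}.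

Section Agreement.
Variables (G1 G2 : graph) (S : {pred nat}) (e1 : env G1) (e2 : env G2).
Hypothesis e12 : agree_on S e1 e2.

Lemma agree_onC : agree_on S e2 e1.
Proof. by move=> a b ha hb; rewrite e12. Qed.

Lemma agree_on_sat_atom a b : a \in S -> b \in S ->
  (sat e1 (FEq a b) <-> sat e2 (FEq a b)) /\ (sat e1 (FAdj a b) <-> sat e2 (FAdj a b)).
Proof.
move=> ha hb; have := e12 ha hb; rewrite /atom_type /=.
case: (e1 a) => [u|]; case: (e1 b) => [v|]; case: (e2 a) => [u'|]; case: (e2 b) => [v'|] //.
by case=> E ->; split=> //; split=> /eqP; [rewrite E | rewrite -E] => /eqP.
Qed.

Lemma agree_on_upd z v w :
  {in S, forall a, a != z ->
     omap (ptype (@gadj G1) v) (e1 a) = omap (ptype (@gadj G2) w) (e2 a)} ->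
  agree_on S (upd e1 z v) (upd e2 z w).
Proof.
move=> ez a b ha hb; rewrite /atom_type /upd.
case: (eqVneq a z) => [_|az]; case: (eqVneq b z) => [_|bz].
- by rewrite (ptypexx (@girr G1)) (ptypexx (@girr G2)).
- exact: ez b hb bz.
- have := ez a ha az; case: (e1 a) => [u|]; case: (e2 a) => [u'|] //= E.
  by rewrite (ptypeC (@gsym G1) u) E (ptypeC (@gsym G2) w).
- exact: e12.
Qed.

End Agreement.

Section Bisimulation.
(* [R d e1 e2]: Duplicator can survive [d] more moves on the variables in [S] from the
   position given by the assignments [e1] and [e2]. *)
Variables (G1 G2 : graph) (S : {pred nat}) (R : nat -> env G1 -> env G2 -> Prop).
Hypothesis R_agree : forall d e1 e2, R d e1 e2 -> agree_on S e1 e2.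
Hypothesis R_forth : forall d e1 e2 x v, R d.+1 e1 e2 -> x \in S ->
  exists w, R d (upd e1 x v) (upd e2 x w).
Hypothesis R_back : forall d e1 e2 x w, R d.+1 e1 e2 -> x \in S ->
  exists v, R d (upd e1 x v) (upd e2 x w).

Lemma sat_bisim f : {subset vars f <= S} ->
  forall d e1 e2, qd f <= d -> R d e1 e2 -> (sat e1 f <-> sat e2 f).
Proof.
have sub_cat (g h : form) : {subset vars g ++ vars h <= S} ->
    {subset vars g <= S} /\ {subset vars h <= S}.
  by move=> ghS; split=> z z_in; apply: ghS; rewrite mem_cat z_in ?orbT.
elim: f => [a b|a b|g IH|g IHg h IHh|g IHg h IHh|g IHg h IHh|x g IH|x g IH] /= fS d e1 e2 fd eR.
1,2: have aS : a \in S by apply: fS; rewrite mem_head.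
1,2: have bS : b \in S by apply: fS; rewrite !inE eqxx orbT.
1,2: by have [] := agree_on_sat_atom (R_agree eR) aS bS.
- by have := IH fS d e1 e2 fd eR; tauto.
1-3: have [gS hS] := sub_cat _ _ fS; move: fd; rewrite geq_max => /andP[gd hd].
1-3: by have := IHg gS d e1 e2 gd eR; have := IHh hS d e1 e2 hd eR; tauto.
1,2: have xS : x \in S by apply: fS; rewrite mem_head.
1,2: have gS : {subset vars g <= S} by move=> z zg; apply: fS; rewrite inE zg orbT.
1,2: case: d fd eR => // d fd eR.
- split=> -[v].
    by have [w eR'] := R_forth v eR xS => /(IH gS d _ _ fd eR').1; exists w.
  by move=> vw; have [u eR'] := R_back v eR xS; exists u; apply/(IH gS d _ _ fd eR').
- split=> H v.
    by have [u eR'] := R_back v eR xS; apply/(IH gS d _ _ fd eR').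
  by have [w eR'] := R_forth v eR xS; apply/(IH gS d _ _ fd eR').
Qed.

End Bisimulation.

Section EFGame.
Variables (T1 T2 : eqType) (r1 : rel T1) (r2 : rel T2).

Definition partial_iso (L : seq (T1 * T2)) :=
  {in L &, forall p q, ptype r1 p.1 q.1 = ptype r2 p.2 q.2}.

Fixpoint ef_game (d : nat) (L : seq (T1 * T2)) : Prop :=
  if d is d'.+1 then
    [/\ partial_iso L, forall v, exists w, ef_game d' ((v, w) :: L)
      & forall w, exists v, ef_game d' ((v, w) :: L)]
  else partial_iso L.

Lemma ef_game_iso d L : ef_game d L -> partial_iso L.
Proof. by case: d => [|d] // []. Qed.

Hypotheses (r1s : symmetric r1) (r2s : symmetric r2).
Hypotheses (r1i : irreflexive r1) (r2i : irreflexive r2).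

Lemma partial_iso_cons v w L : partial_iso L ->
  {in L, forall q, ptype r1 v q.1 = ptype r2 w q.2} -> partial_iso ((v, w) :: L).
Proof.
move=> iL vwL p q; rewrite !inE => /predU1P[-> | pL] /predU1P[-> | qL] /=.
- by rewrite !ptypexx.
- exact: vwL.
- by rewrite ptypeC // vwL // ptypeC.
- exact: iL.
Qed.

Lemma partial_iso1 v w : partial_iso [:: (v, w)].
Proof. by apply: partial_iso_cons => // q; rewrite inE => /eqP-> /=; rewrite !ptypexx. Qed.

End EFGame.

Section EFTheorem.
Variables G1 G2 : graph.

Definition env_pairs_in (L : seq ('I_(gn G1) * 'I_(gn G2))) (e1 : env G1) (e2 : env G2) :=
  forall a, if (e1 a, e2 a) is (Some u, Some w) then (u, w) \in L
            else (e1 a == None) && (e2 a == None).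

Lemma env_pairs_in_upd L e1 e2 x v w : env_pairs_in L e1 e2 ->
  env_pairs_in ((v, w) :: L) (upd e1 x v) (upd e2 x w).
Proof.
move=> eL a; rewrite /upd; case: (a == x); first by rewrite mem_head.
by have := eL a; case: (e1 a) => [u|]; case: (e2 a) => [u'|] //; rewrite inE orbC => ->.
Qed.

Lemma env_pairs_in_agree L e1 e2 : partial_iso (@gadj G1) (@gadj G2) L ->
  env_pairs_in L e1 e2 -> agree_on predT e1 e2.
Proof.
move=> iL eL a b _ _; rewrite /atom_type; have := eL a; have := eL b.
case: (e1 a) => [u|]; case: (e2 a) => [u'|]; case: (e1 b) => [v|]; case: (e2 b) => [v'|] //=.
by move=> vL uL; rewrite (iL _ _ uL vL).
Qed.

Theorem ef_game_models d f : qd f <= d -> ef_game (@gadj G1) (@gadj G2) d [::] ->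
  (models G1 f <-> models G2 f).
Proof.
move=> fd g; pose R n e1 e2 := exists L, ef_game (@gadj G1) (@gadj G2) n L /\ env_pairs_in L e1 e2.
apply: (@sat_bisim _ _ predT R) fd _ => //.
- by move=> n e1 e2 [L [/ef_game_iso iL eL]]; apply: env_pairs_in_agree iL eL.
- move=> n e1 e2 x v [L [[_ forth _] eL]] _; have [w g'] := forth v.
  by exists w, ((v, w) :: L); split=> //; apply: env_pairs_in_upd.
- move=> n e1 e2 x w [L [[_ _ back] eL]] _; have [v g'] := back w.
  by exists v, ((v, w) :: L); split=> //; apply: env_pairs_in_upd.
- by exists [::].
Qed.

End EFTheorem.

Definition pair_extension (G G' : graph) := forall (v u : 'I_(gn G)) (u' : 'I_(gn G')),
  exists w, ptype (@gadj G) v u = ptype (@gadj G') w u'.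

Section PebbleMoves.
Variables (G G' : graph) (w0 : 'I_(gn G')) (e : env G) (e' : env G').

Lemma agree_on1_upd x v w : agree_on (mem [:: x]) e e' ->
  agree_on (mem [:: x]) (upd e x v) (upd e' x w).
Proof. by move=> ee'; apply: agree_on_upd => // a; rewrite inE => ->. Qed.

Lemma agree_on2_forth x y z v : pair_extension G G' ->
  agree_on (mem [:: x; y]) e e' -> z \in [:: x; y] ->
  exists w, agree_on (mem [:: x; y]) (upd e z v) (upd e' z w).
Proof.
move=> ext ee' zS; set z' := if z == x then y else x.
have z'S : z' \in [:: x; y] by rewrite /z'; case: ifP; rewrite !inE eqxx ?orbT.
have other a : a \in [:: x; y] -> a != z -> a = z'.
  rewrite /z' !inE; case: (eqVneq z x) => [->|zx]; first by case/orP=> /eqP-> //; rewrite eqxx.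
  move: zS; rewrite !inE (negPf zx) /= => /eqP zy /orP[]/eqP-> //.
  by rewrite zy eqxx.
suff [w ez] : exists w, omap (ptype (@gadj G) v) (e z') = omap (ptype (@gadj G') w) (e' z').
  by exists w; apply: agree_on_upd => // a aS az; rewrite (other a aS az).
have := ee' z' z' z'S z'S; rewrite /atom_type.
case: (e z') => [u|]; case: (e' z') => [u'|] // _; last by exists w0.
by have [w vw] := ext v u u'; exists w; rewrite /= vw.
Qed.

End PebbleMoves.

Section Pebbles.
Variables (G1 G2 : graph) (v0 : 'I_(gn G1)) (w0 : 'I_(gn G2)).

Lemma pebble_models (S : seq nat) f : {subset vars f <= S} ->
  (forall (e1 : env G1) (e2 : env G2) z v, agree_on (mem S) e1 e2 -> z \in S ->
     exists w, agree_on (mem S) (upd e1 z v) (upd e2 z w)) ->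
  (forall (e1 : env G1) (e2 : env G2) z w, agree_on (mem S) e1 e2 -> z \in S ->
     exists v, agree_on (mem S) (upd e1 z v) (upd e2 z w)) ->
  (models G1 f <-> models G2 f).
Proof.
move=> fS forth back.
by apply: (@sat_bisim G1 G2 (mem S) (fun _ => agree_on (mem S)) _ _ _ f fS (qd f)).
Qed.

Lemma width1_models f : width f <= 1 -> (models G1 f <-> models G2 f).
Proof.
rewrite /width => wf.
have [x fx] : exists x, {subset vars f <= [:: x]}.
  by case E: (undup (vars f)) wf => [|x [|//]] _; [exists 0 | exists x] => z; rewrite -mem_undup E.
apply: pebble_models fx _ _ => e1 e2 z ? e12; rewrite inE => /eqP->.
  by exists w0; apply: agree_on1_upd.
by exists v0; apply: agree_on1_upd.
Qed.

Lemma width2_models f : pair_extension G1 G2 -> pair_extension G2 G1 ->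
  width f <= 2 -> (models G1 f <-> models G2 f).
Proof.
rewrite /width => ext12 ext21 wf.
have [x [y fxy]] : exists x y, {subset vars f <= [:: x; y]}.
  by case E: (undup (vars f)) wf => [|x [|y [|//]]] _; [exists 0, 0|exists x, x|exists x, y];
    move=> z; rewrite -mem_undup E // !inE => ->.
apply: pebble_models fxy _ _ => e1 e2 z u e12 zS.
  exact: agree_on2_forth.
have [v /agree_onC e21] := agree_on2_forth v0 u ext21 (agree_onC e12) zS.
by exists v.
Qed.

End Pebbles.

Definition has_nbr (T : finType) (r : rel T) (a : T) := [exists c, r a c].
Definition has_nonnbr (T : finType) (r : rel T) (a : T) := [exists c, (c != a) && ~~ r a c].

Section Profiles.
Variables (T1 T2 : finType) (r1 : rel T1) (r2 : rel T2).
Hypotheses (r1s : symmetric r1) (r2s : symmetric r2).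
Hypotheses (r1i : irreflexive r1) (r2i : irreflexive r2).

Lemma ptype_realize a b : (has_nbr r1 a -> has_nbr r2 b) ->
  (has_nonnbr r1 a -> has_nonnbr r2 b) -> forall c, exists d, ptype r1 c a = ptype r2 d b.
Proof.
move=> nb nn c; rewrite /ptype; case: (eqVneq c a) => [->|ca].
  by exists b; rewrite !eqxx r1i r2i.
case ca1: (r1 c a).
  have /existsP[d bd] : has_nbr r2 b by apply: nb; apply/existsP; exists c; rewrite r1s.
  by exists d; rewrite r2s bd; case: eqP bd => // ->; rewrite r2i.
have /existsP[d /andP[db bd]] : has_nonnbr r2 b.
  by apply: nn; apply/existsP; exists c; rewrite ca r1s ca1.
by exists d; rewrite r2s (negPf db) (negPf bd).
Qed.

End Profiles.

Section ProfileGame.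
Variables (T1 T2 : finType) (r1 : rel T1) (r2 : rel T2).
Hypotheses (r1s : symmetric r1) (r2s : symmetric r2).
Hypotheses (r1i : irreflexive r1) (r2i : irreflexive r2).

Lemma ef_game1 a b : has_nbr r1 a = has_nbr r2 b -> has_nonnbr r1 a = has_nonnbr r2 b ->
  ef_game r1 r2 1 [:: (a, b)].
Proof.
move=> nb nn.
have [nb12 nb21] : (has_nbr r1 a -> has_nbr r2 b) /\ (has_nbr r2 b -> has_nbr r1 a).
  by rewrite nb.
have [nn12 nn21] : (has_nonnbr r1 a -> has_nonnbr r2 b) /\ (has_nonnbr r2 b -> has_nonnbr r1 a).
  by rewrite nn.
split; first exact: partial_iso1.
- move=> v; have [w vw] := ptype_realize r1s r2s r1i r2i nb12 nn12 v.
  exists w; apply: partial_iso_cons => //; first exact: partial_iso1.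
  by move=> q; rewrite inE => /eqP->.
- move=> w; have [v wv] := ptype_realize r2s r1s r2i r1i nb21 nn21 w.
  exists v; apply: partial_iso_cons => //; first exact: partial_iso1.
  by move=> q; rewrite inE => /eqP->.
Qed.

End ProfileGame.

Lemma pair_extension_of (G G' : graph) :
  (forall u, has_nbr (@gadj G') u && has_nonnbr (@gadj G') u) -> pair_extension G G'.
Proof.
move=> nbrs v u u'; have /andP[nb nn] := nbrs u'.
by apply: ptype_realize => //; [apply: gsym | apply: gsym | apply: girr | apply: girr].
Qed.

Lemma connect_homo (T T' : finType) (r : rel T) (r' : rel T') (f : T -> T') :
  {homo f : x y / r x y >-> r' x y} -> {homo f : x y / connect r x y >-> connect r' x y}.
Proof.
move=> fr x y /connectP[p + ->]; elim: p x => [|z p IH] x /=; first by rewrite connect0.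
by case/andP=> /fr xz /IH; apply: connect_trans (connect1 xz).
Qed.

Section GraphOf.
Variables (T : finType) (e : rel T) (es : symmetric e) (ei : irreflexive e).

Definition graph_of_adj : rel 'I_#|T| := fun i j => e (enum_val i) (enum_val j).

Lemma graph_of_adj_sym : symmetric graph_of_adj.
Proof. by move=> i j; rewrite /graph_of_adj es. Qed.

Lemma graph_of_adj_irr : irreflexive graph_of_adj.
Proof. by move=> i; rewrite /graph_of_adj ei. Qed.

Definition graph_of := Graph graph_of_adj_sym graph_of_adj_irr.

Lemma graph_of_adjE a b : @gadj graph_of (enum_rank a) (enum_rank b) = e a b.
Proof. by rewrite /= /graph_of_adj !enum_rankK. Qed.

Lemma graph_of_contains (F : graph) : contains graph_of F <->
  exists f : 'I_(gn F) -> T, injective f /\ forall a b, @gadj F a b -> e (f a) (f b).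
Proof.
split=> -[f [f_inj fe]].
  by exists (fun a => enum_val (f a)); split=> [a b /enum_val_inj /f_inj|a b /fe].
exists (fun a => enum_rank (f a)); split=> [a b /enum_rank_inj /f_inj //|a b /fe].
by rewrite graph_of_adjE.
Qed.

Lemma graph_of_nbrs : (forall a, has_nbr e a && has_nonnbr e a) ->
  forall u, has_nbr (@gadj graph_of) u && has_nonnbr (@gadj graph_of) u.
Proof.
move=> nbrs u; have /andP[/existsP[b ab] /existsP[c /andP[ca ac]]] := nbrs (enum_val u).
apply/andP; split; apply/existsP.
  by exists (enum_rank b); rewrite -(enum_valK u) graph_of_adjE.
exists (enum_rank c); rewrite -(enum_valK u) graph_of_adjE ac andbT.
by rewrite (inj_eq enum_rank_inj).
Qed.

Definition avoiding (S : {set T}) := [rel a b | [&& e a b, a \notin S & b \notin S]].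

Lemma graph_of_kconnected k : 0 < k < #|T| ->
  (forall S : {set T}, #|S| < k -> {in ~: S &, forall x y, connect (avoiding S) x y}) ->
  kconnected graph_of k.
Proof.
case/andP=> k_gt0 kT conn.
have conn_on (S : {set 'I_#|T|}) : #|S| < k -> connected_on graph_of (~: S).
  move=> Sk; split.
    have [|x _ xS] := @avoid_card _ predT (mem S); last by exists x; rewrite inE.
    by apply: leq_trans Sk _; rewrite card_ord ltnW.
  move=> x y xS yS; rewrite -(enum_valK x) -(enum_valK y).
  apply: (@connect_homo _ _ (avoiding (enum_val @: S))).
    have inS a : (enum_rank a \in S) = (a \in enum_val @: S).
      by rewrite -(mem_imset _ _ enum_val_inj) enum_rankK.
    by move=> a b /and3P[ab aS bS]; rewrite /= !inE /graph_of_adj !enum_rankK !inS ab aS bS.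
  apply: conn; first by rewrite card_imset //; apply: enum_val_inj.
  1,2: by rewrite inE (mem_imset _ _ enum_val_inj) -in_setC.
split=> //; split=> [|S /conn_on //].
by have := conn_on set0; rewrite cards0 setC0; apply.
Qed.

End GraphOf.

Section GraphOfGame.
Variables (T1 T2 : finType) (e1 : rel T1) (e2 : rel T2).
Variables (e1s : symmetric e1) (e1i : irreflexive e1) (e2s : symmetric e2) (e2i : irreflexive e2).

Lemma graph_of_ef_game d L : ef_game e1 e2 d L ->
  ef_game (@gadj (graph_of e1s e1i)) (@gadj (graph_of e2s e2i)) d
    [seq (enum_rank p.1, enum_rank p.2) | p <- L].
Proof.
have iso L' : partial_iso e1 e2 L' -> partial_iso (@gadj (graph_of e1s e1i))
    (@gadj (graph_of e2s e2i)) [seq (enum_rank p.1, enum_rank p.2) | p <- L'].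
  move=> iL' _ _ /mapP[p pL ->] /mapP[q qL ->].
  by rewrite /ptype /= /graph_of_adj !enum_rankK !(inj_eq enum_rank_inj); apply: iL'.
elim: d L => [|d IH] L; first exact: iso.
case=> iL forth back; split; first exact: iso.
- by move=> v; have [w /IH] := forth (enum_val v); rewrite /= enum_valK; exists (enum_rank w).
- by move=> w; have [v /IH] := back (enum_val w); rewrite /= enum_valK; exists (enum_rank v).
Qed.
End GraphOfGame.

(** * Four-vertex subgraphs and the bounds for P4 *)

Section FourVertexSubgraphs.
Variables (T : finType) (r : rel T) (rs : symmetric r).

Definition hom4 (adj : rel 'I_4) :=
  exists f : 'I_4 -> T, injective f /\ forall i j, adj i j -> r (f i) (f j).

Lemma hom4_of (adj : rel 'I_4) a b c d : uniq [:: a; b; c; d] ->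
  (forall i j : 'I_4, adj i j -> r (nth a [:: a; b; c; d] i) (nth a [:: a; b; c; d] j)) ->
  hom4 adj.
Proof.
move=> abcd fr; exists (fun i : 'I_4 => nth a [:: a; b; c; d] i); split=> // i j /eqP.
by rewrite nth_uniq // => /eqP/val_inj.
Qed.

Lemma hom4_uniq (f : 'I_4 -> T) : injective f ->
  uniq [:: f (@Ordinal 4 0 isT); f (@Ordinal 4 1 isT); f (@Ordinal 4 2 isT); f (@Ordinal 4 3 isT)].
Proof. by move/map_inj_uniq/(_ [:: Ordinal _; Ordinal _; Ordinal _; Ordinal _]) => /= ->. Qed.

Lemma hom4_pathP : hom4 p4_adj <->
  exists a b c d, [/\ uniq [:: a; b; c; d], r a b, r b c & r c d].
Proof.
split=> [[f [f_inj fr]]|[a [b [c [d [abcd ab bc cd]]]]]].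
  exists (f (@Ordinal 4 0 isT)), (f (@Ordinal 4 1 isT)),
         (f (@Ordinal 4 2 isT)), (f (@Ordinal 4 3 isT)).
  by split; [exact: hom4_uniq | apply: fr ..].
apply: hom4_of abcd _ => -[[|[|[|[|i]]]] ?] // [[|[|[|[|j]]]] ?] //=; rewrite /p4_adj //= => _;
  by rewrite rs.
Qed.

Lemma hom4_cycleP : hom4 c4_adj <->
  exists a b c d, [/\ uniq [:: a; b; c; d], r a b, r b c, r c d & r d a].
Proof.
split=> [[f [f_inj fr]]|[a [b [c [d [abcd ab bc cd da]]]]]].
  exists (f (@Ordinal 4 0 isT)), (f (@Ordinal 4 1 isT)),
         (f (@Ordinal 4 2 isT)), (f (@Ordinal 4 3 isT)).
  by split; [exact: hom4_uniq | apply: fr ..].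
apply: hom4_of abcd _ => -[[|[|[|[|i]]]] ?] // [[|[|[|[|j]]]] ?] //=; rewrite /c4_adj //= => _;
  by rewrite rs.
Qed.

End FourVertexSubgraphs.

Section GraphFacts.
Variable G : graph.
Implicit Types (u v w : 'I_(gn G)) (A : {set 'I_(gn G)}).

Lemma containsP4P : contains G P4 <->
  exists a b c d : 'I_(gn G), [/\ uniq [:: a; b; c; d], gadj a b, gadj b c & gadj c d].
Proof. exact: hom4_pathP (@gsym G). Qed.

Lemma containsC4P : contains G C4 <->
  exists a b c d : 'I_(gn G), [/\ uniq [:: a; b; c; d], gadj a b, gadj b c, gadj c d & gadj d a].
Proof. exact: hom4_cycleP (@gsym G). Qed.

Lemma fresh_vertex (s : seq 'I_(gn G)) : size s < gn G -> exists w, w \notin s.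
Proof.
move=> sG; have [|w _ ws] := @avoid_card _ predT (mem s); last by exists w.
by rewrite cardT size_enum_ord; apply: leq_ltn_trans (card_size s) sG.
Qed.

Lemma connected_closed A x : connected G -> x \in A ->
  (forall u v, u \in A -> gadj u v -> v \in A) -> forall y, y \in A.
Proof.
case=> _ conn xA closedA y; have /connectP[p + ->] := conn x y (in_setT _) (in_setT _).
by elim: p x xA => //= z p IH x xA /andP[/and3P[/(closedA x z xA) zA _ _] /IH]; apply.
Qed.

Definition dominating u := forall v, v = u \/ gadj u v.

Lemma noP4_of_edge_cover c : (forall u v, gadj u v -> u = c \/ v = c) -> ~ contains G P4.
Proof.
move=> cover /containsP4P[a [b [x [y [+ /cover ab _ /cover xy]]]]].
by case: ab => ->; case: xy => ->; rewrite /= !inE !eqxx ?orbT ?andbF.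
Qed.

End GraphFacts.

Lemma uniq4 (T : eqType) (a b c d : T) : a != b -> a != c -> a != d -> b != c -> b != d -> c != d ->
  uniq [:: a; b; c; d].
Proof. by rewrite /= !inE !negb_or => -> -> -> -> -> ->. Qed.

Lemma gadj_neq (G : graph) (u v : 'I_(gn G)) : gadj u v -> u != v.
Proof. by apply: contraTneq => ->; rewrite girr. Qed.

Definition dominates_form (x y : nat) := FAll y (FOr (FEq y x) (FAdj x y)).

Definition star_form := FAnd (FEx 0 (dominates_form 0 1))
  (FAnd (FAll 0 (FAll 1 (FImp (FAdj 0 1) (FOr (dominates_form 0 1) (dominates_form 1 0)))))
        (FNot (FEx 0 (FEx 1 (FAnd (FNot (FEq 0 1))
                                  (FAnd (dominates_form 0 1) (dominates_form 1 0))))))).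

Definition PhiP4 := FNot star_form.

(* With only two variables, "G is a star" is phrased as: some vertex dominates, every
   edge has a dominating end, and no two distinct vertices dominate. *)
Definition is_star (G : graph) :=
  (exists c : 'I_(gn G), dominating c) /\
  (forall u v : 'I_(gn G), gadj u v -> dominating u \/ dominating v) /\
  ~ (exists u v : 'I_(gn G), u <> v /\ dominating u /\ dominating v).

Lemma models_star_form G : models G star_form <-> is_star G.
Proof. exact: iff_refl. Qed.

Lemma is_star_noP4 G : is_star G -> ~ contains G P4.
Proof.
case=> -[c domc] [edge_dom uniq_dom]; apply: (noP4_of_edge_cover (c := c)) => u v /edge_dom.
case=> [domu|domv]; [left|right]; apply: NNPP => ne; apply: uniq_dom.
  by exists u, c.
by exists v, c.
Qed.

Section P4Free.
Variable G : graph.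
Hypotheses (G_conn : connected G) (G_big : 5 <= gn G) (G_noP4 : ~ contains G P4).
Implicit Types (a b c u v w : 'I_(gn G)).

Lemma P4_free_path a b c d : uniq [:: a; b; c; d] -> gadj a b -> gadj b c -> gadj c d -> False.
Proof. by move=> abcd ab bc cd; apply: G_noP4; apply/containsP4P; exists a, b, c, d. Qed.

Lemma fresh_vertex_small (s : seq 'I_(gn G)) : size s < 5 -> exists w, w \notin s.
Proof. by move=> s5; apply: fresh_vertex; apply: leq_trans G_big. Qed.

Lemma exists_nbr u : exists v, gadj u v.
Proof.
apply: NNPP => no_nbr; have [w] := fresh_vertex_small (s := [:: u]) isT.
have closed v v' : v \in [set u] -> gadj v v' -> v' \in [set u].
  by rewrite inE => /eqP-> uv'; case: no_nbr; exists v'.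
by have := connected_closed G_conn (set11 u) closed w; rewrite !inE => ->.
Qed.

Lemma exists_cherry : exists c a b, [/\ a != b, gadj c a & gadj c b].
Proof.
have [x _] := fresh_vertex_small (s := [::]) isT; have [a xa] := exists_nbr x.
case: (boolP [exists b, gadj x b && (b != a)]) => [/existsP[b /andP[xb ba]]|no_x].
  by exists x, a, b; rewrite eq_sym.
case: (boolP [exists b, gadj a b && (b != x)]) => [/existsP[b /andP[ab bx]]|no_a].
  by exists a, x, b; rewrite eq_sym gsym.
have closed v v' : v \in [set x; a] -> gadj v v' -> v' \in [set x; a].
  rewrite !inE => /orP[]/eqP-> vv'.
    by move/existsPn/(_ v'): no_x; rewrite vv' /= negbK => ->; rewrite orbT.
  by move/existsPn/(_ v'): no_a; rewrite vv' /= negbK => ->.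
have [w] := fresh_vertex_small (s := [:: x; a]) isT.
by have := connected_closed G_conn (setU11 x [set a]) closed w; rewrite !inE => ->.
Qed.

Lemma cherry_dominating c a b : a != b -> gadj c a -> gadj c b -> dominating c.
Proof.
move=> ab ca cb; pose A := [set v | (v == c) || gadj c v].
suff closed u v : u \in A -> gadj u v -> v \in A.
  move=> v; have := connected_closed G_conn (_ : c \in A) closed v.
  by rewrite !inE eqxx => /(_ isT) /orP[/eqP|]; [left|right].
rewrite !inE => /orP[/eqP->|cu] uv; first by rewrite uv orbT.
apply: contraT; rewrite negb_or => /andP[vc cv]; exfalso.
have [w [cw wu]] : exists w, gadj c w /\ w != u.
  by case: (eqVneq a u) => [<-|au]; [exists b; rewrite eq_sym | exists a].
apply: (@P4_free_path v u c w) => //; try by rewrite gsym.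
apply: uniq4; [rewrite eq_sym; exact: gadj_neq uv | exact: vc | by apply: contraNneq cv => -> |
               rewrite eq_sym; exact: gadj_neq cu | by rewrite eq_sym | exact: gadj_neq cw].
Qed.

Lemma dominating_edge c u v : dominating c -> gadj u v -> u = c \/ v = c.
Proof.
move=> domc uv; apply: NNPP => /not_or_and[/eqP uc /eqP vc].
have [w] := fresh_vertex_small (s := [:: c; u; v]) isT; rewrite !inE !negb_or => /and3P[wc wu wv].
have cw : gadj c w by case: (domc w) => // /eqP; rewrite (negPf wc).
have cu : gadj c u by case: (domc u) => // /eqP; rewrite (negPf uc).
apply: (@P4_free_path v u c w) => //; try by rewrite gsym.
apply: uniq4; [rewrite eq_sym; exact: gadj_neq uv | exact: vc | by rewrite eq_sym |
               exact: uc | by rewrite eq_sym | by rewrite eq_sym].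
Qed.

Lemma dominating_unique c d : dominating c -> dominating d -> d = c.
Proof.
move=> domc domd; apply: NNPP => /eqP dc.
have [w] := fresh_vertex_small (s := [:: c; d]) isT; rewrite !inE !negb_or => /andP[wc wd].
have dw : gadj d w by case: (domd w) => // /eqP; rewrite (negPf wd).
by case: (dominating_edge domc dw) => /eqP; rewrite ?(negPf dc) ?(negPf wc).
Qed.

Lemma P4_free_is_star : is_star G.
Proof.
have [c [a [b [ab ca cb]]]] := exists_cherry; have domc := cherry_dominating ab ca cb.
split; first by exists c.
split; first by move=> u v /(dominating_edge domc) [->|->]; [left|right].
case=> u [v [uv [domu domv]]]; apply: uv.
by rewrite (dominating_unique domc domu) (dominating_unique domc domv).
Qed.

End P4Free.

Lemma PhiP4_defines : defines Pv P4 PhiP4.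
Proof.
split; first by case=> [|[|x]].
exists 5 => G G_conn G_big; change (~ models G star_form <-> contains G P4).
rewrite models_star_form.
split=> [not_star|/is_star_noP4 //]; apply: NNPP => noP4.
exact/not_star/P4_free_is_star.
Qed.

Lemma not_defines_of_pairs p F (P : form -> Prop) :
  (forall k, exists G1 G2 : graph, [/\ connected G1 /\ connected G2,
     param_ge p G1 k /\ param_ge p G2 k, ~ contains G1 F /\ contains G2 F
   & forall Phi, P Phi -> (models G1 Phi <-> models G2 Phi)]) ->
  forall Phi, defines p F Phi -> ~ P Phi.
Proof.
move=> pairs Phi [_ [k Phi_def]] PPhi.
have [G1 [G2 [[conn1 conn2] [big1 big2] [noF1 F2] equiv]]] := pairs k.
by apply/noF1/(Phi_def G1 conn1 big1)/(equiv Phi PPhi)/(Phi_def G2 conn2 big2).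
Qed.

Lemma connected_of_center (G : graph) (c : 'I_(gn G)) :
  (forall x, x != c -> gadj c x) -> connected G.
Proof.
move=> c_adj; split; first by exists c; rewrite inE.
have c_edge x : connect [rel a b | [&& gadj a b, a \in setT & b \in setT]] c x /\
                connect [rel a b | [&& gadj a b, a \in setT & b \in setT]] x c.
  case: (eqVneq x c) => [->|xc]; first by rewrite connect0.
  by rewrite !connect1 //= !inE ?c_adj // gsym c_adj.
by move=> x y _ _; apply: connect_trans (c_edge x).2 (c_edge y).1.
Qed.

Section Stars.
Variable n : nat.
Local Notation V := 'I_n.+4.

Definition star_adj : rel V := fun i j => (i == ord0) != (j == ord0).

Definition star_edge_adj : rel V := fun i j =>
  star_adj i j || [&& i == 1 :> nat & j == 2 :> nat] || [&& i == 2 :> nat & j == 1 :> nat].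

Lemma star_adj_sym : symmetric star_adj.
Proof. by move=> i j; rewrite /star_adj eq_sym. Qed.

Lemma star_adj_irr : irreflexive star_adj.
Proof. by move=> i; rewrite /star_adj eqxx. Qed.

Lemma star_edge_adj_sym : symmetric star_edge_adj.
Proof.
move=> i j; rewrite /star_edge_adj star_adj_sym.
by case: (i == 1 :> nat); case: (i == 2 :> nat); case: (j == 1 :> nat); case: (j == 2 :> nat);
  rewrite /= ?orbT ?orbF.
Qed.

Lemma star_edge_adj_irr : irreflexive star_edge_adj.
Proof. by move=> i; rewrite /star_edge_adj star_adj_irr; case: (nat_of_ord i) => [|[|[|]]]. Qed.

Definition star_graph := Graph star_adj_sym star_adj_irr.
Definition star_edge_graph := Graph star_edge_adj_sym star_edge_adj_irr.

Lemma star_adj0 v : v != ord0 -> star_adj ord0 v.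
Proof. by move=> /negPf v0; rewrite /star_adj eqxx v0. Qed.

Lemma star_edge_adjW : subrel star_adj star_edge_adj.
Proof. by move=> i j ij; rewrite /star_edge_adj ij. Qed.

Lemma star_graph_connected : connected star_graph.
Proof. exact: (@connected_of_center star_graph ord0 star_adj0). Qed.

Lemma star_edge_graph_connected : connected star_edge_graph.
Proof. by apply: (@connected_of_center star_edge_graph ord0) => v /star_adj0 /star_edge_adjW. Qed.

Lemma star_graph_noP4 : ~ contains star_graph P4.
Proof.
apply: (@noP4_of_edge_cover star_graph ord0) => u v; rewrite /= /star_adj.
by case: (eqVneq u ord0) => [|_ /negbNE/eqP]; [left|right].
Qed.

Lemma star_edge_graph_P4 : contains star_edge_graph P4.
Proof.
apply/containsP4P.
by exists (@Ordinal n.+4 3 isT), (@Ordinal n.+4 0 isT),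
          (@Ordinal n.+4 1 isT), (@Ordinal n.+4 2 isT).
Qed.

Lemma star_has_nbr v : has_nbr star_adj v.
Proof.
apply/existsP; case: (eqVneq v ord0) => [->|/star_adj0 v0].
  by exists (@Ordinal n.+4 1 isT); rewrite /star_adj /=.
by exists ord0; rewrite star_adj_sym.
Qed.

Lemma star_has_nonnbr_neq0 v : has_nonnbr star_adj v -> v != ord0.
Proof.
by case/existsP=> c /andP[cv]; apply: contraNneq => v0; rewrite v0 star_adj0 // -v0.
Qed.

Lemma star_edge_has_nonnbr v : v != ord0 -> has_nonnbr star_edge_adj v.
Proof.
move=> v0; apply/existsP; case: v v0 => -[|[|[|[|k]]]] hk // _.
3: exists (@Ordinal n.+4 1 isT).
1,2,4: exists (@Ordinal n.+4 3 isT).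
all: by rewrite /star_edge_adj /star_adj /=.
Qed.

Lemma star_profiles v : has_nbr star_adj v = has_nbr star_edge_adj v /\
  has_nonnbr star_adj v = has_nonnbr star_edge_adj v.
Proof.
have /existsP[c vc] := star_has_nbr v.
split; first by rewrite star_has_nbr; apply/esym/existsP; exists c; apply: star_edge_adjW.
apply/idP/idP => [/star_has_nonnbr_neq0/star_edge_has_nonnbr //|/existsP[d /andP[dv vd]]].
by apply/existsP; exists d; rewrite dv; apply: contra vd; apply: star_edge_adjW.
Qed.

Lemma star_ef_game2 : ef_game star_adj star_edge_adj 2 [::].
Proof.
have game1 v : ef_game star_adj star_edge_adj 1 [:: (v, v)].
  have [nb nn] := star_profiles v.
  apply: (@ef_game1 _ _ star_adj star_edge_adj) nb nn.
  - exact: star_adj_sym.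
  - exact: star_edge_adj_sym.
  - exact: star_adj_irr.
  - exact: star_edge_adj_irr.
by split=> // v; exists v.
Qed.

End Stars.

Lemma star_pairs (P : form -> Prop) :
  (forall n Phi, P Phi -> (models (star_graph n) Phi <-> models (star_edge_graph n) Phi)) ->
  forall Phi, defines Pv P4 Phi -> ~ P Phi.
Proof.
move=> equiv; apply: not_defines_of_pairs => k; exists (star_graph k), (star_edge_graph k).
split; last exact: equiv.
- by split; [exact: star_graph_connected | exact: star_edge_graph_connected].
- by split; rewrite /= /nverts /= !leqW.
- by split; [exact: star_graph_noP4 | exact: star_edge_graph_P4].
Qed.

Theorem P4_width_depth : W_is Pv P4 2 /\ D_is Pv P4 3.
Proof.
split; split; try by exists PhiP4; split; [exact: PhiP4_defines|].
- move=> Phi /(@star_pairs (fun Phi => width Phi < 2)) not_narrow.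
  rewrite leqNgt; apply/negP; apply: not_narrow => n {}Phi.
  by apply: width1_models; apply: ord0.
- move=> Phi /(@star_pairs (fun Phi => qd Phi < 3)) not_shallow.
  rewrite leqNgt; apply/negP; apply: not_shallow => n {}Phi q2.
  exact: (@ef_game_models (star_graph n) (star_edge_graph n) 2 Phi q2 (star_ef_game2 n)).
Qed.

(** * Rich graphs *)

Definition common_nbr (T : finType) (r : rel T) (a b : T) := [exists c, r a c && r b c].

Record rich (T : finType) (r : rel T) : Prop := Rich {
  rich_sym : symmetric r;
  rich_irr : irreflexive r;
  rich_triangle_free : forall a b c, r a b -> r a c -> ~~ r b c;
  rich_nbr : forall a, has_nbr r a;
  rich_common_nonnbr : forall a b, exists c, [&& c != a, c != b, ~~ r a c & ~~ r b c];
  rich_private_nbr : forall a b, a != b -> exists c, [&& c != b, r a c & ~~ r b c];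
  rich_far : forall a, exists b, [&& b != a, ~~ r a b & ~~ common_nbr r a b] }.

(* In a rich graph this refined type of a pebbled pair is all that matters for the
   remaining two rounds. *)
Definition ctype (T : finType) (r : rel T) (a b : T) := (ptype r a b, common_nbr r a b).

Section Rich.
Variables (T : finType) (r : rel T) (R : rich r).

Lemma rich_neq a b : r a b -> a != b.
Proof. by apply: contraTneq => ->; rewrite (rich_irr R). Qed.

Lemma rich_has_nonnbr a : has_nonnbr r a.
Proof.
have [c /and4P[ca _ ac _]] := rich_common_nonnbr R a a.
by apply/existsP; exists c; rewrite ca ac.
Qed.

Lemma rich_near a : exists b, [&& b != a, ~~ r a b & common_nbr r a b].
Proof.
have /existsP[c ac] := rich_nbr R a; have ca : r c a by rewrite (rich_sym R).
have [b /and3P[ba cb ab]] := rich_private_nbr R (rich_neq ca).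
by exists b; rewrite ba ab; apply/existsP; exists c; rewrite ac (rich_sym R).
Qed.

Lemma rich_realize a b (x y : bool) : (a = b -> x = y) -> (x && y -> common_nbr r a b) ->
  exists c, [&& c != a, c != b, r c a == x & r c b == y].
Proof.
have sym := rich_sym R; case: x; case: y => /= xy cn.
- have /existsP[c /andP[ac bc]] : [exists c, r a c && r b c] := cn isT.
  by exists c; rewrite !(sym c) ac bc !(eq_sym c) !rich_neq.
- have [|c /and3P[cb ac bc]] := rich_private_nbr R (a := a) (b := b); first by apply/eqP => /xy.
  by exists c; rewrite !(sym c) ac (negPf bc) cb eq_sym rich_neq.
- have [|c /and3P[ca bc ac]] := rich_private_nbr R (a := b) (b := a).
    by apply/eqP => /esym/xy.
  by exists c; rewrite !(sym c) bc (negPf ac) ca eq_sym rich_neq.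
- have [c /and4P[ca cb ac bc]] := rich_common_nonnbr R a b.
  by exists c; rewrite !(sym c) ca cb (negPf ac) (negPf bc).
Qed.

End Rich.

Section RichPair.
Variables (T1 T2 : finType) (r1 : rel T1) (r2 : rel T2) (R1 : rich r1) (R2 : rich r2).

Lemma rich_ctype_realize a1 a2 b1 : exists b2, ctype r1 a1 b1 = ctype r2 a2 b2.
Proof.
rewrite /ctype /ptype; case: (eqVneq b1 a1) => [->|ba].
  exists a2; rewrite !eqxx (rich_irr R1) (rich_irr R2); congr (_, _).
  have /existsP[c ac] := rich_nbr R1 a1; have /existsP[d ad] := rich_nbr R2 a2.
  by apply/existsP/existsP; [exists d | exists c]; rewrite !andbb.
case: (boolP (r1 a1 b1)) => [ab|nab].
  have /existsP[b2 ab2] := rich_nbr R2 a2; exists b2; rewrite ab2 (negPf (rich_neq R2 ab2)).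
  congr (_, _); apply/idP/idP => /existsP[c /andP[ac bc]].
    by move: (rich_triangle_free R1 ab ac); rewrite bc.
  by move: (rich_triangle_free R2 ab2 ac); rewrite bc.
case: (common_nbr r1 a1 b1).
  have [b2 /and3P[b2a nab2 cn2]] := rich_near R2 a2.
  by exists b2; rewrite eq_sym (negPf b2a) (negPf nab2) cn2.
have [b2 /and3P[b2a nab2 /negPf cn2]] := rich_far R2 a2.
by exists b2; rewrite eq_sym (negPf b2a) (negPf nab2) cn2.
Qed.

Lemma rich_extend a1 b1 a2 b2 : ctype r1 a1 b1 = ctype r2 a2 b2 ->
  forall c1, exists c2, ptype r1 c1 a1 = ptype r2 c2 a2 /\ ptype r1 c1 b1 = ptype r2 c2 b2.
Proof.
move=> E c1; have [E12 cn12] := (congr1 fst E, congr1 snd E); rewrite /= in E12 cn12.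
have [s1 s2] := (rich_sym R1, rich_sym R2).
have [i1 i2] := (rich_irr R1, rich_irr R2).
case: (eqVneq c1 a1) => [->|c1a].
  by exists a2; rewrite !ptypexx.
case: (eqVneq c1 b1) => [->|c1b].
  by exists b2; rewrite ptypeC // E12 ptypeC // !ptypexx.
have ab_xy : a2 = b2 -> r1 c1 a1 = r1 c1 b1.
  by move=> ab2; have /eqP-> : a1 == b1 by move: (congr1 fst E12) => /= ->; rewrite ab2.
have xy_cn : r1 c1 a1 && r1 c1 b1 -> common_nbr r2 a2 b2.
  by move=> /andP[ca cb]; rewrite -cn12; apply/existsP; exists c1; rewrite !(s1 _ c1) ca cb.
have [c2 /and4P[c2a c2b /eqP c2a' /eqP c2b']] := rich_realize R2 ab_xy xy_cn.
by exists c2; rewrite /ptype (negPf c1a) (negPf c1b) (negPf c2a) (negPf c2b) c2a' c2b'.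
Qed.

End RichPair.

Section RichGame.
Variables (T1 T2 : finType) (r1 : rel T1) (r2 : rel T2) (R1 : rich r1) (R2 : rich r2).

Let s1 := rich_sym R1.
Let s2 := rich_sym R2.
Let i1 := rich_irr R1.
Let i2 := rich_irr R2.

Lemma rich_ef_game1 a1 b1 a2 b2 : ctype r1 a1 b1 = ctype r2 a2 b2 ->
  ef_game r1 r2 1 [:: (b1, b2); (a1, a2)].
Proof.
move=> E; have E12 : ptype r1 a1 b1 = ptype r2 a2 b2 := congr1 fst E.
have iso : partial_iso r1 r2 [:: (b1, b2); (a1, a2)].
  apply: (partial_iso_cons s1 s2 i1 i2 (partial_iso1 s1 s2 i1 i2 (v := a1) (w := a2))) => q.
  by rewrite inE => /eqP-> /=; rewrite ptypeC // E12 ptypeC.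
split=> // [c1|c2].
  have [c2 [ca cb]] := rich_extend R1 R2 E c1; exists c2.
  by apply: (partial_iso_cons s1 s2 i1 i2 iso) => q; rewrite !inE => /orP[]/eqP->.
have [c1 [ca cb]] := rich_extend R2 R1 (esym E) c2; exists c1.
by apply: (partial_iso_cons s1 s2 i1 i2 iso) => q; rewrite !inE => /orP[]/eqP->.
Qed.

Lemma rich_ef_game2 a1 a2 : ef_game r1 r2 2 [:: (a1, a2)].
Proof.
split=> [|b1|b2]; first exact: (partial_iso1 s1 s2 i1 i2).
  by have [b2 E] := rich_ctype_realize R1 R2 a1 a2 b1; exists b2; apply: rich_ef_game1.
by have [b1 E] := rich_ctype_realize R2 R1 a2 a1 b2; exists b1; apply: rich_ef_game1.
Qed.

Lemma rich_ef_game3 (v0 : T1) (w0 : T2) : ef_game r1 r2 3 [::].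
Proof. by split=> // [v|w]; [exists w0 | exists v0]; apply: rich_ef_game2. Qed.

End RichGame.

(** * The biaffine plane *)

Lemma card_bigcup_le (I T : finType) (P : pred I) (A : I -> {set T}) :
  #|\bigcup_(i | P i) A i| <= \sum_(i | P i) #|A i|.
Proof.
elim/big_ind2: _ => [|B1 n1 B2 n2 B1n B2n|//]; first by rewrite cards0.
by apply: leq_trans (leq_card_setU _ _) _; apply: leq_add.
Qed.

Lemma card_preim_le (A B : finType) (f : A -> B) (D : {pred A}) (S : {set B}) :
  {in D &, injective f} -> #|[set x in D | f x \in S]| <= #|S|.
Proof.
move=> f_inj; rewrite -(card_in_imset (f := f)); last first.
  by move=> x y; rewrite !inE => /andP[xD _] /andP[yD _]; apply: f_inj.
by apply/subset_leq_card/subsetP => y /imsetP[x]; rewrite inE => /andP[_ fxS] ->.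
Qed.

Section BiaffinePlane.
Variable p : nat.
Hypothesis p_prime : prime p.
Local Notation F := 'F_p.
Local Open Scope ring_scope.

Definition plane_vertex : finType := (bool * (F * F))%type.
Local Notation V := plane_vertex.

Definition point (x y : F) : V := (false, (x, y)).
Definition line (m c : F) : V := (true, (m, c)).

Definition on_line (P L : F * F) := P.2 == L.1 * P.1 + L.2.

Definition incidence (u v : V) :=
  (u.1 != v.1) && (if u.1 then on_line v.2 u.2 else on_line u.2 v.2).

Definition extra_point : V := point 1 0.
Definition extra_line : V := line 1 0.

Definition biaffine (extra : bool) (u v : V) := incidence u v ||
  extra && ((u == extra_point) && (v == extra_line) || (u == extra_line) && (v == extra_point)).

Lemma incidence_sym : symmetric incidence.
Proof. by move=> [[] ?] [[] ?]. Qed.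

Lemma incidence_irr : irreflexive incidence.
Proof. by move=> u; rewrite /incidence eqxx. Qed.

Lemma biaffine_sym extra : symmetric (biaffine extra).
Proof.
move=> u v; rewrite /biaffine incidence_sym; congr (_ || _ && _).
by rewrite orbC !(andbC (u == _)).
Qed.

Lemma biaffine_irr extra : irreflexive (biaffine extra).
Proof.
move=> u; rewrite /biaffine incidence_irr /=; apply/negP => /andP[_].
by case/orP=> /andP[/eqP-> /eqP].
Qed.

Lemma biaffine_bipartite extra u v : biaffine extra u v -> u.1 != v.1.
Proof. by case/orP=> [/andP[] //|/andP[_ /orP[]/andP[/eqP-> /eqP->]]]. Qed.

Lemma incidence_biaffine extra : subrel incidence (biaffine extra).
Proof. by move=> u v uv; rewrite /biaffine uv. Qed.

Lemma card_plane : #|{: V}| = (2 * (p * p))%N.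
Proof. by rewrite !card_prod card_bool card_Fp. Qed.

Lemma two_points_one_line (x1 y1 x2 y2 m c m' c' : F) :
  y1 = m * x1 + c -> y2 = m * x2 + c -> y1 = m' * x1 + c' -> y2 = m' * x2 + c' ->
  (x1, y1) = (x2, y2) \/ (m, c) = (m', c').
Proof.
move=> e1 e2; case: (eqVneq m m') => [<-|mm'] e1' e2'.
  by right; congr (_, _); apply: (addrI (m * x1)); rewrite -e1 -e1'.
left; suff x12 : x1 = x2 by rewrite e1 e2 x12.
have : (m - m') * (x1 - x2) = 0.
  have -> : (m - m') * (x1 - x2) = (m * x1 + c - (m' * x1 + c')) - (m * x2 + c - (m' * x2 + c')).
    by ring.
  by rewrite -e1 -e1' -e2 -e2' !subrr.
by move/eqP; rewrite mulf_eq0 !subr_eq0 (negPf mm') => /eqP.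
Qed.

Definition nbr_map (a : V) (t : F) : V :=
  if a.1 then point t (a.2.1 * t + a.2.2) else line t (a.2.2 - t * a.2.1).

Lemma nbr_map_inj a : injective (nbr_map a).
Proof. by rewrite /nbr_map; case: a.1 => t t' [->]. Qed.

Lemma incidence_nbrsE a : [set c | incidence a c] = nbr_map a @: setT.
Proof.
apply/setP=> v; rewrite inE; apply/idP/imsetP => [|[t _ ->]]; last first.
  by case: a => -[] [m c]; rewrite /incidence /on_line /nbr_map /=; apply/eqP; ring.
case: a => -[] [m c]; case: v => -[] [s t]; rewrite /incidence /on_line //= => /eqP E;
  exists s => //; rewrite /nbr_map /= E //.
by rewrite /line; congr (_, (_, _)); ring.
Qed.

Lemma card_incidence_nbrs a : #|[set c | incidence a c]| = p.
Proof. by rewrite incidence_nbrsE card_imset ?cardsT ?card_Fp //; apply: nbr_map_inj. Qed.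

Lemma incidence_codegree a b c d : a != b ->
  incidence a c -> incidence b c -> incidence a d -> incidence b d -> c = d.
Proof.
case: a b c d => [[] [a1 a2]] [[] [b1 b2]] [[] [c1 c2]] [[] [d1 d2]] //= ab;
  rewrite /on_line /= => /eqP ac /eqP bc /eqP ad /eqP bd.
- by case: (two_points_one_line ac ad bc bd) => [[-> ->]|[a12 b12]] //; rewrite a12 b12 eqxx in ab.
- by case: (two_points_one_line ac bc ad bd) => [[a12 b12]|[-> ->]] //; rewrite a12 b12 eqxx in ab.
Qed.

Definition nbrs extra a := [set c | biaffine extra a c].
Local Notation extra_pair := [set extra_point; extra_line].

Lemma in_nbrs extra a c : (c \in nbrs extra a) = biaffine extra a c.
Proof. by rewrite inE. Qed.

Lemma biaffine_off_extra extra a c : c \notin extra_pair -> biaffine extra a c = incidence a c.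
Proof.
by rewrite !inE negb_or => /andP[/negPf cP /negPf cL]; rewrite /biaffine cP cL !andbF orbF.
Qed.

Lemma nbrs_sub extra a : nbrs extra a \subset [set c | incidence a c] :|: extra_pair.
Proof.
apply/subsetP=> c; rewrite in_nbrs in_setU => ac; apply/orP.
case: (boolP (c \in extra_pair)) => cP; [by right | left].
by rewrite inE -(biaffine_off_extra extra a cP).
Qed.

Lemma card_nbrs extra a : #|nbrs extra a| <= p + 2.
Proof.
apply: leq_trans (subset_leq_card (nbrs_sub extra a)) _.
apply: leq_trans (leq_card_setU _ _) _.
by rewrite card_incidence_nbrs leq_add2l cards2; case: (_ != _).
Qed.

Lemma card_common_nbrs extra a b : a != b -> #|nbrs extra a :&: nbrs extra b| <= 3.
Proof.
move=> ab; set C := [set c | incidence a c && incidence b c].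
have sub : nbrs extra a :&: nbrs extra b \subset C :|: extra_pair.
  apply/subsetP=> c; rewrite in_setI !in_nbrs in_setU => /andP[ac bc]; apply/orP.
  case: (boolP (c \in extra_pair)) => cP; [by right | left].
  by rewrite inE -!(biaffine_off_extra extra _ cP) ac bc.
have C1 : #|C| <= 1.
  apply/card_le1_eqP=> c d; rewrite !inE => /andP[ac bc] /andP[ad bd].
  exact: incidence_codegree ab ad bd ac bc.
apply: leq_trans (subset_leq_card sub) _; apply: leq_trans (leq_card_setU _ _) _.
by rewrite cards2; case: (_ != _); lia.
Qed.

Section BiaffineRich.
Variable extra : bool.
Hypothesis p_ge7 : 7 <= p.
Local Notation adj := (biaffine extra).

Lemma biaffine_triangle_free a b c : adj a b -> adj a c -> ~~ adj b c.
Proof.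
move=> /biaffine_bipartite ab /biaffine_bipartite ac; apply/negP => /biaffine_bipartite.
by move: ab ac; case: a.1; case: b.1; case: c.1.
Qed.

Lemma biaffine_has_nbr a : has_nbr adj a.
Proof.
apply/existsP; exists (nbr_map a 0); apply: incidence_biaffine.
have : nbr_map a 0 \in [set c | incidence a c] by rewrite incidence_nbrsE imset_f.
by rewrite inE.
Qed.

Lemma biaffine_common_nonnbr a b : exists c, [&& c != a, c != b, ~~ adj a c & ~~ adj b c].
Proof.
have [|c _] := @avoid_card _ predT ([set a; b] :|: nbrs extra a :|: nbrs extra b).
  have := (leq_card_setU ([set a; b] :|: nbrs extra a) (nbrs extra b)).1.
  have := (leq_card_setU [set a; b] (nbrs extra a)).1.
  have := card_nbrs extra a; have := card_nbrs extra b.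
  have : #|[set a; b]| <= 2 by rewrite cards2; case: (_ != _).
  rewrite card_plane; nia.
rewrite !in_setU !in_set1 => /norP[/norP[/norP[ca cb] ac] bc].
by exists c; rewrite -!in_nbrs ca cb ac bc.
Qed.

Lemma biaffine_private_nbr a b : a != b -> exists c, [&& c != b, adj a c & ~~ adj b c].
Proof.
move=> ab; have [|c ac] := @avoid_card _ [set c | incidence a c]
  ([set b] :|: (nbrs extra a :&: nbrs extra b)).
  have := (leq_card_setU [set b] (nbrs extra a :&: nbrs extra b)).1.
  have := card_common_nbrs extra ab.
  rewrite card_incidence_nbrs cards1; lia.
have {}ac : adj a c by apply: incidence_biaffine; rewrite inE in ac.
rewrite in_setU in_set1 in_setI !in_nbrs ac /= => /norP[cb bc].
by exists c; rewrite cb ac.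
Qed.

Lemma biaffine_far a : exists b, [&& b != a, ~~ adj a b & ~~ common_nbr adj a b].
Proof.
have [|b _] := @avoid_card _ predT (a |: nbrs extra a :|: \bigcup_(c in nbrs extra a) nbrs extra c).
  have := (leq_card_setU (a |: nbrs extra a) (\bigcup_(c in nbrs extra a) nbrs extra c)).1.
  have near : #|a |: nbrs extra a| <= (p + 2).+1.
    by rewrite cardsU1; apply: leq_add (leq_b1 _) (card_nbrs extra a).
  have far : #|\bigcup_(c in nbrs extra a) nbrs extra c| <= (p + 2) * (p + 2).
    apply: leq_trans (card_bigcup_le _ _) _.
    apply: leq_trans (_ : _ <= \sum_(c in nbrs extra a) (p + 2)) _.
      by apply: leq_sum => c _; apply: card_nbrs.
    by rewrite sum_nat_const leq_mul2r card_nbrs orbT.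
  rewrite card_plane; nia.
rewrite !in_setU in_set1 => /norP[/norP[ba ab] /bigcupP no_path].
exists b; rewrite ba -in_nbrs ab /=; apply/existsP => -[c /andP[ac bc]].
by apply: no_path; exists c; rewrite in_nbrs // biaffine_sym.
Qed.

Lemma biaffine_rich : rich adj.
Proof.
split; [exact: biaffine_sym | exact: biaffine_irr | exact: biaffine_triangle_free |
        exact: biaffine_has_nbr | exact: biaffine_common_nonnbr | exact: biaffine_private_nbr |
        exact: biaffine_far].
Qed.

End BiaffineRich.

Lemma biaffine_false_noC4 :
  ~ exists a b c d, [/\ uniq [:: a; b; c; d], biaffine false a b, biaffine false b c,
                        biaffine false c d & biaffine false d a].
Proof.
have inc u v : biaffine false u v = incidence u v by rewrite /biaffine orbF.
case=> a [b [c [d [+ ab bc cd da]]]]; rewrite !inc in ab bc cd da.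
rewrite /= !inE !negb_or => /and4P[/and3P[_ ac _] /andP[_ bd] _ _].
by move: bd; rewrite (incidence_codegree ac ab _ _ cd) ?eqxx // incidence_sym.
Qed.

Lemma biaffine_true_C4 :
  exists a b c d, [/\ uniq [:: a; b; c; d], biaffine true a b, biaffine true b c,
                      biaffine true c d & biaffine true d a].
Proof.
exists (point 0 0), (line 0 0), extra_point, extra_line.
by split; rewrite /biaffine /incidence /on_line /=.
Qed.

Section Connectivity.
Variable S : {set V}.
Hypothesis S_small : 2 * #|S| + 1 < p.
Local Notation path_off_S := (connect (avoiding incidence S)).

Let card_F : #|predT : {pred F}| = p := card_Fp p_prime.

Lemma exists_off_S (f : F -> V) : injective f -> exists t, f t \notin S.
Proof.
move=> f_inj; have [|t _] := @avoid_card _ predT [set t in predT | f t \in S].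
  by apply: leq_ltn_trans (card_preim_le _ (in2W f_inj)) _; rewrite card_F; lia.
by rewrite inE; exists t.
Qed.

Lemma exists_off_S2 (f g : F -> V) t0 : injective f -> {in predC1 t0 &, injective g} ->
  exists t, [&& t != t0, f t \notin S & g t \notin S].
Proof.
move=> f_inj g_inj.
have [|t _] := @avoid_card _ predT
  ([set t0] :|: [set t in predT | f t \in S] :|: [set t in predC1 t0 | g t \in S]).
  apply: (leq_ltn_trans (leq_card_setU _ _)).
  apply: (@leq_ltn_trans (1 + #|S| + #|S|)); last by rewrite card_F; lia.
  apply: leq_add; last exact: card_preim_le.
  apply: leq_trans (leq_card_setU _ _) _.
  by rewrite cards1 leq_add2l; apply: card_preim_le; apply: in2W.
rewrite !in_setU in_set1 !inE /= => /norP[/norP[tt0 ft]]; rewrite tt0 /= => gt.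
by exists t; rewrite tt0 ft gt.
Qed.

Lemma edge_off_S u v : incidence u v -> u \notin S -> v \notin S -> path_off_S u v.
Proof. by move=> uv uS vS; apply: connect1; rewrite /= uv uS vS. Qed.

Definition line_through (x y m : F) := line m (y - m * x).

Lemma incidence_line_through x y m : incidence (point x y) (line_through x y m).
Proof. by rewrite /incidence /on_line /=; apply/eqP; ring. Qed.

Lemma line_through_inj x y : injective (line_through x y).
Proof. by move=> m m' [->]. Qed.

Definition meet (m1 c1 m c : F) := let x := (c - c1) / (m1 - m) in point x (m1 * x + c1).

Lemma incidence_meet_left m1 c1 m c : incidence (line m1 c1) (meet m1 c1 m c).
Proof. by rewrite /incidence /on_line /=. Qed.

Lemma incidence_meet_right m1 c1 m c : m != m1 -> incidence (meet m1 c1 m c) (line m c).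
Proof.
move=> mm1; rewrite /incidence /on_line /=; set x := (c - c1) / (m1 - m).
have ex : (m1 - m) * x = c - c1 by rewrite mulrC divfK // subr_eq0 eq_sym.
rewrite -subr_eq0; apply/eqP.
by transitivity ((m1 - m) * x - (c - c1)); [ring | rewrite ex subrr].
Qed.

Lemma points_off_S_connected x1 y1 x2 y2 :
  point x1 y1 \notin S -> point x2 y2 \notin S -> path_off_S (point x1 y1) (point x2 y2).
Proof.
move=> P1S P2S; have [m1 L1S] := exists_off_S (@line_through_inj x1 y1).
have P1L1 := incidence_line_through x1 y1 m1.
apply: connect_trans (edge_off_S P1L1 P1S L1S) _.
rewrite /line_through in L1S P1L1 *; set c1 := y1 - m1 * x1 in L1S P1L1 *.
have [P2L1|P2L1] := boolP (incidence (line m1 c1) (point x2 y2)); first exact: edge_off_S.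
pose X m := meet m1 c1 m (y2 - m * x2).
have X_inj : {in predC1 m1 &, injective X}.
  move=> m m' mm1 m'm1 Xmm'; apply/eqP; apply: contraNT P2L1 => mm'.
  have <- : X m = point x2 y2.
    apply: (@incidence_codegree (line_through x2 y2 m) (line_through x2 y2 m')).
    - by rewrite (inj_eq (@line_through_inj x2 y2)).
    - by rewrite incidence_sym; apply: incidence_meet_right.
    - by rewrite Xmm' incidence_sym; apply: incidence_meet_right.
    - by rewrite incidence_sym; apply: incidence_line_through.
    - by rewrite incidence_sym; apply: incidence_line_through.
  exact: incidence_meet_left.
have [m2 /and3P[m21 L2S XS]] := exists_off_S2 (@line_through_inj x2 y2) X_inj.
apply: connect_trans (edge_off_S (incidence_meet_left _ _ _ _) L1S XS) _.
apply: connect_trans (edge_off_S (incidence_meet_right _ _ m21) XS L2S) _.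
by apply: edge_off_S L2S P2S; rewrite incidence_sym incidence_line_through.
Qed.

Lemma off_S_connected u v : u \notin S -> v \notin S -> path_off_S u v.
Proof.
have to_point w : w \notin S -> exists x y, point x y \notin S /\ path_off_S w (point x y).
  case: w => -[] [a b] wS; last by exists a, b; split=> //; apply: connect0.
  have [t tS] := exists_off_S (@nbr_map_inj (line a b)).
  by exists t, (a * t + b); split=> //; apply: edge_off_S tS; rewrite /incidence /on_line /=.
have sym : connect_sym (avoiding incidence S).
  by apply: sym_connect_sym => a b /=; rewrite incidence_sym (andbC (a \notin S)).
move=> uS vS; have [x1 [y1 [P1S uP1]]] := to_point u uS; have [x2 [y2 [P2S vP2]]] := to_point v vS.
apply: connect_trans uP1 _; apply: connect_trans (points_off_S_connected P1S P2S) _.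
by rewrite sym.
Qed.

End Connectivity.

End BiaffinePlane.

(** * Four-cycles *)

Definition PhiC4 := FEx 0 (FEx 1 (FAnd (FNot (FEq 0 1)) (FEx 2 (FEx 3 (FAnd (FNot (FEq 2 3))
  (FAnd (FAdj 0 2) (FAnd (FAdj 2 1) (FAnd (FAdj 1 3) (FAdj 3 0))))))))).

Lemma PhiC4_defines : defines Pkappa C4 PhiC4.
Proof.
split; first by case=> [|[|[|[|x]]]].
exists 0 => G _ _; rewrite containsC4P /models /=; split.
  case=> a [c [ac [b [d [bd [ab [bc [cd da]]]]]]]]; exists a, b, c, d; split=> //.
  apply: uniq4; [exact: gadj_neq ab | exact/eqP | rewrite eq_sym; exact: gadj_neq da |
                 exact: gadj_neq bc | exact/eqP | exact: gadj_neq cd].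
case=> a [b [c [d [+ ab bc cd da]]]]; rewrite /= !inE !negb_or.
case/and4P=> /and3P[_ /eqP ac _] /andP[_ /eqP bd] _ _.
by exists a, c; split=> //; exists b, d.
Qed.

Section BiaffinePair.
Variables (p : nat) (p_prime : prime p).

Definition biaffine_graph extra := graph_of (@biaffine_sym p extra) (@biaffine_irr p extra).

Lemma biaffine_graph_kconnected extra K : 0 < K -> 2 * K <= p ->
  kconnected (biaffine_graph extra) K.
Proof.
move=> K_gt0 Kp; apply: graph_of_kconnected => [|S SK x y].
  by rewrite K_gt0 card_plane //; nia.
rewrite !inE => xS yS; have S_small : 2 * #|S| + 1 < p by lia.
apply: connect_sub (off_S_connected p_prime S_small xS yS) => a b /and3P[ab aS bS].
by apply: connect1; rewrite /= aS bS incidence_biaffine.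
Qed.

Lemma biaffine_graph_noC4 : ~ contains (biaffine_graph false) C4.
Proof.
by move/graph_of_contains/(hom4_cycleP (@biaffine_sym p false)); apply: biaffine_false_noC4.
Qed.

Lemma biaffine_graph_C4 : contains (biaffine_graph true) C4.
Proof.
by apply/graph_of_contains/(hom4_cycleP (@biaffine_sym p true)); apply: biaffine_true_C4.
Qed.

Hypothesis p_ge7 : 7 <= p.

Lemma biaffine_graphs_depth3 Phi : qd Phi <= 3 ->
  (models (biaffine_graph false) Phi <-> models (biaffine_graph true) Phi).
Proof.
move=> shallow; apply: (@ef_game_models _ _ 3 Phi shallow).
have R extra := biaffine_rich p_prime extra p_ge7.
exact: graph_of_ef_game _ _ _ _ (rich_ef_game3 (R false) (R true) (extra_point p) (extra_point p)).
Qed.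

Lemma biaffine_graphs_width2 Phi : width Phi <= 2 ->
  (models (biaffine_graph false) Phi <-> models (biaffine_graph true) Phi).
Proof.
have nbrs extra u : has_nbr (@gadj (biaffine_graph extra)) u &&
                    has_nonnbr (@gadj (biaffine_graph extra)) u.
  have R := biaffine_rich p_prime extra p_ge7.
  by apply: graph_of_nbrs => a; rewrite (rich_nbr R) (rich_has_nonnbr R).
move=> narrow; pose v0 := enum_rank (extra_point p).
by apply: (@width2_models (biaffine_graph false) (biaffine_graph true) v0 v0 Phi _ _ narrow);
  apply: pair_extension_of.
Qed.

End BiaffinePair.

Lemma biaffine_pairs k : exists G1 G2 : graph, [/\ connected G1 /\ connected G2,
  param_ge Pkappa G1 k /\ param_ge Pkappa G2 k, ~ contains G1 C4 /\ contains G2 C4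
  & forall Phi, qd Phi <= 3 \/ width Phi <= 2 -> (models G1 Phi <-> models G2 Phi)].
Proof.
have [p p_big p_prime] := prime_above (2 * k + 8); have p_ge7 : 7 <= p by lia.
have conn extra : kconnected (biaffine_graph p extra) k.+1.
  by apply: biaffine_graph_kconnected => //; lia.
exists (biaffine_graph p false), (biaffine_graph p true); split.
- by split; [case: (conn false) => _ [] | case: (conn true) => _ []].
- by split; exists k.+1; split.
- by split; [exact: biaffine_graph_noC4 | exact: biaffine_graph_C4].
- by move=> Phi [shallow|narrow]; [apply: biaffine_graphs_depth3 | apply: biaffine_graphs_width2].
Qed.

Theorem C4_kappa_depth_width : D_is Pkappa C4 4 /\ W_ge Pkappa C4 3.
Proof.
have bound Phi : defines Pkappa C4 Phi -> ~ (qd Phi <= 3 \/ width Phi <= 2).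
  exact: not_defines_of_pairs biaffine_pairs Phi.
split; first split.
- by exists PhiC4; split; [exact: PhiC4_defines|].
- move=> Phi /bound not_low; rewrite leqNgt; apply/negP => shallow.
  by apply: not_low; left.
- move=> Phi /bound not_low; rewrite leqNgt; apply/negP => narrow.
  by apply: not_low; right.
Qed.

Theorem theorem13 :
  (W_is Pv P4 2 /\ D_is Pv P4 3) /\ (D_is Pkappa C4 4 /\ W_ge Pkappa C4 3).
Proof. by split; [exact: P4_width_depth | exact: C4_kappa_depth_width]. Qed.
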